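(* Let $n/2 \leq r \leq n$ and let $(\mathcal{S},\mathcal{T})$ be an $r$-maximal cross-intersecting pair in $\binom{[n]}{\leq r}$. For any integer $\ell\ge0$ with $\ell \le r$ and $n-\ell \leq r$, \[|\mathcal{S}(n-\ell)|+ |\mathcal{T}(n-\ell)| + |\mathcal{S}(\ell)|+ |\mathcal{T}(\ell)| = |\mathcal{X}_{n, r}(n-\ell)| + |\mathcal{Y}_{n, r}(n-\ell)| + |\mathcal{X}_{n, r}(\ell)| + |\mathcal{Y}_{n, r}(\ell)|.\]
   Context: $\binom{[n]}{\le r}$ is the set of subsets of $[n]$ of size at most $r$. A pair $(\mathcal{S},\mathcal{T})$ of non-empty families of non-empty subsets is cross-intersecting if $S\cap T\ne\emptyset$ for all $S\in\mathcal{S},T\in\mathcal{T}$; it is $r$-maximal if whenever $(\mathcal{V},\mathcal{W})$ is a cross-intersecting pair in $\binom{[n]}{\le r}$ with $\mathcal{S}\subseteq\mathcal{V}$, $\mathcal{T}\subseteq\mathcal{W}$, then $(\mathcal{V},\mathcal{W})=(\mathcal{S},\mathcal{T})$. For a family $\mathcal{B}$, $\mathcal{B}(\ell)=\{B\in\mathcal{B}:|B|=\ell\}$. $\mathcal{X}_{n,r}=\{[r]\}$ and $\mathcal{Y}_{n,r}=\{Y\in\binom{[n]}{\le r}: Y\cap[r]\ne\emptyset\}$. *)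

From mathcomp Require Import all_boot.
Set Implicit Arguments. Unset Strict Implicit. Unset Printing Implicit Defensive.

(* Ground set [n] is 'I_n = {0,...,n-1}; [r] is {i : 'I_n | i < r}. *)
Definition first_r (n r : nat) : {set 'I_n} := [set i : 'I_n | i < r].

Definition in_binom_le (n r : nat) (F : {set {set 'I_n}}) : Prop :=
  forall A, A \in F -> #|A| <= r.

Definition cross_intersecting (n : nat) (S T : {set {set 'I_n}}) : Prop :=
  [/\ S != set0, T != set0, set0 \notin S, set0 \notin T &
      forall A B, A \in S -> B \in T -> A :&: B != set0].

Definition r_maximal (n r : nat) (S T : {set {set 'I_n}}) : Prop :=
  [/\ in_binom_le r S, in_binom_le r T, cross_intersecting S T &
      forall V W : {set {set 'I_n}},
        in_binom_le r V -> in_binom_le r W -> cross_intersecting V W ->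
        S \subset V -> T \subset W -> (V, W) = (S, T)].

Definition layer (n : nat) (B : {set {set 'I_n}}) (l : nat) : {set {set 'I_n}} :=
  [set A in B | #|A| == l].

Definition X_fam (n r : nat) : {set {set 'I_n}} := [set first_r n r].
Definition Y_fam (n r : nat) : {set {set 'I_n}} :=
  [set Y : {set 'I_n} | (#|Y| <= r) && (Y :&: first_r n r != set0)].

From mathcomp Require Import all_boot zify.
Set Implicit Arguments. Unset Strict Implicit. Unset Printing Implicit Defensive.

(* By maximality, on the layers of size l and n - l (both at most r) exactly
   one of A in S and ~A in T holds: they cannot both hold since A and ~A are
   disjoint, and if A is not in S then some B in T misses A, so ~A contains B
   and can be added to T.  Complementation then pairs S(l) with T(n - l) and
   T(l) with S(n - l), each pair covering all C(n, l) sets of size l once.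
   The pair (X, Y) has the same complementation property, so both sides
   equal 2 C(n, l). *)

Lemma cardsC_ord n (A : {set 'I_n}) : #|~: A| = n - #|A|.
Proof. by rewrite -(addKn #|A| #|~: A|) cardsC card_ord. Qed.

Lemma card_layer_compl n a b (F G : {set {set 'I_n}}) : a + b = n ->
    (forall A : {set 'I_n}, #|A| = a -> (A \in F) = (~: A \notin G)) ->
  #|layer F a| + #|layer G b| = 'C(n, a).
Proof.
move=> hab FG; rewrite -[in RHS](card_ord n) -card_draws.
rewrite -(cardsID F [set A : {set _} | #|A| == a]).
congr (_ + _); first by apply: eq_card => A; rewrite !inE andbC.
rewrite -(card_preimset _ (@setC_inj _)); apply: eq_card => A.
have sizeC : (n - #|A| == b) = (#|A| == a).
  move: #|A| (max_card A); rewrite card_ord -hab => k hk.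
  by rewrite -(eqn_add2r k) subnK // [b + k]addnC eqn_add2r eq_sym.
rewrite !inE cardsC_ord sizeC.
by case: eqP => [/FG -> | _]; rewrite ?negbK ?andbF.
Qed.

Lemma cross_intersecting_sym n (S T : {set {set 'I_n}}) :
  cross_intersecting S T -> cross_intersecting T S.
Proof. by case=> *; split=> // A B *; rewrite setIC; auto. Qed.

Lemma r_maximal_sym n r (S T : {set {set 'I_n}}) :
  r_maximal r S T -> r_maximal r T S.
Proof.
case=> bS bT /cross_intersecting_sym hTS hmax; split=> // V W bV bW hVW sTV sSW.
by case: (hmax W V bW bV (cross_intersecting_sym hVW) sSW sTV) => -> ->.
Qed.

Lemma r_maximal_saturated n r (S T : {set {set 'I_n}}) (X : {set 'I_n}) :
    r_maximal r S T -> #|X| <= r -> X != set0 ->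
  (forall Y, Y \in T -> X :&: Y != set0) -> X \in S.
Proof.
case=> bS bT [Sn0 Tn0 S0 T0 hST] hmax hX Xn0 hXT.
suff [<-] : (X |: S, T) = (S, T) by apply: setU11.
apply: hmax; rewrite ?subsetUr //.
  by move=> A /setU1P [-> | /bS].
split=> //; first by apply/set0Pn; exists X; apply: setU11.
  by rewrite in_setU1 negb_or eq_sym Xn0.
by move=> A B /setU1P [-> | AS] BT; [apply: hXT | apply: hST].
Qed.

Lemma r_maximal_memC n r (S T : {set {set 'I_n}}) (A : {set 'I_n}) :
    r_maximal r S T -> #|A| <= r -> #|~: A| <= r ->
  (A \in S) = (~: A \notin T).
Proof.
move=> hmax hA hAc; have [_ _ [_ Tn0 _ T0 hST] _] := hmax.
apply/idP/idP => [AS | AcT].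
  by apply/negP => /(hST _ _ AS); rewrite setICr eqxx.
apply: contraR AcT => AS.
have [B BT AB] : exists2 B, B \in T & A :&: B == set0.
  have [-> | An0] := eqVneq A set0.
    by have /set0Pn [B BT] := Tn0; exists B; rewrite ?set0I.
  apply/exists_inP; apply: contraR AS => /exists_inPn hAT.
  exact: r_maximal_saturated hmax hA An0 hAT.
have sBAc : B \subset ~: A by rewrite -disjoints_subset -setI_eq0 setIC.
apply: r_maximal_saturated (r_maximal_sym hmax) hAc _ _.
  by apply: contraTneq sBAc => ->; rewrite subset0; apply: contraNneq T0 => <-.
move=> X XS; apply: contraNneq (hST _ _ XS BT) => XAc0.
by rewrite -subset0 -XAc0 setIC setSI.
Qed.

Lemma card_first_r n r : r <= n -> #|first_r n r| = r.
Proof.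
move=> hrn; have widen_inj : injective (widen_ord hrn) by move=> i j [] /val_inj.
rewrite -[RHS](card_ord r) -(card_imset _ widen_inj).
apply: eq_card => i; rewrite inE; apply/idP/imsetP => [ir | [j _ ->]].
  by exists (Ordinal ir) => //; apply: val_inj.
by rewrite /= ltn_ord.
Qed.

Lemma XY_fam_memC n r (A : {set 'I_n}) : r <= n -> #|A| <= r -> #|~: A| <= r ->
  (A \in X_fam n r) = (~: A \notin Y_fam n r).
Proof.
move=> hrn hA hAc; rewrite !inE hAc negbK setI_eq0 disjoint_sym disjoints_subset setCK.
apply/eqP/idP => [-> // | sub].
by apply/eqP; rewrite eq_sym eqEcard sub card_first_r.
Qed.

Theorem lemma5p2 (n r : nat) (S T : {set {set 'I_n}}) :
  n <= 2 * r -> r <= n -> r_maximal r S T ->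
  forall l : nat, l <= r -> n - l <= r ->
  #|layer S (n - l)| + #|layer T (n - l)| + #|layer S l| + #|layer T l| =
  #|layer (X_fam n r) (n - l)| + #|layer (Y_fam n r) (n - l)|
  + #|layer (X_fam n r) l| + #|layer (Y_fam n r) l|.
Proof.
(* [n <= 2 * r] is implied by [l <= r] and [n - l <= r]. *)
move=> _ hrn hmax l hl hnl.
have hln : l <= n := leq_trans hl hrn.
have ln_n : l + (n - l) = n by rewrite subnKC.
have nl_l : n - l + l = n by rewrite addnC.
have layer_l_le (A : {set 'I_n}) : #|A| = l -> #|A| <= r /\ #|~: A| <= r.
  by move=> hA; rewrite cardsC_ord hA.
have layer_nl_le (A : {set 'I_n}) : #|A| = n - l -> #|A| <= r /\ #|~: A| <= r.
  by move=> hA; rewrite cardsC_ord hA subKn.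
have ST : #|layer S l| + #|layer T (n - l)| = 'C(n, l).
  by apply: card_layer_compl => // A /layer_l_le[]; apply: r_maximal_memC.
have TS : #|layer T l| + #|layer S (n - l)| = 'C(n, l).
  by apply: card_layer_compl => // A /layer_l_le[]; apply/r_maximal_memC/r_maximal_sym.
have XYl : #|layer (X_fam n r) l| + #|layer (Y_fam n r) (n - l)| = 'C(n, l).
  by apply: card_layer_compl => // A /layer_l_le[]; apply: XY_fam_memC.
have XYnl : #|layer (X_fam n r) (n - l)| + #|layer (Y_fam n r) l| = 'C(n, l).
  rewrite -bin_sub //; apply: card_layer_compl => // A /layer_nl_le[].
  exact: XY_fam_memC.
lia.
Qed.
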